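(* For every integer $m\ge2$, $P(m+1)<P(m)$, where $$P(m)=\frac{m}{\sqrt\pi}\int_{-\infty}^{\infty}e^{-t^2}\bigl(1-\Phi(t)\bigr)^{m-1}\,dt.$$
   Context: $\Phi$ is the standard normal cumulative distribution function. $P(m)$ is the limit as the number of voters tends to infinity of the probability that a Condorcet winner exists among $m$ candidates under the impartial culture (each voter independently picks one of the $m!$ strict rankings uniformly at random). *)

From Stdlib Require Import Reals.
From Coquelicot Require Import Coquelicot.
Open Scope R_scope.

Definition Phi (t : R) : R :=
  RInt_gen (fun s => exp (- (s ^ 2) / 2) / sqrt (2 * PI))
           (Rbar_locally m_infty) (at_point t).

Definition P (m : nat) : R :=
  INR m / sqrt PI *
  RInt_gen (fun t => exp (- (t ^ 2)) * (1 - Phi t) ^ (m - 1))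
           (Rbar_locally m_infty) (Rbar_locally p_infty).

From Stdlib Require Import Reals Lra Lia Psatz FunctionalExtensionality.
From Coquelicot Require Import Coquelicot.
Open Scope R_scope.

(* Write phi and Phi for the normal density and distribution function and put
   g_n(t) = exp(-t^2) (1 - Phi t)^n, so that P(n+1) = (n+1)/sqrt(pi) * int g_n.
   Since exp(-t^2) = 2 pi phi(t)^2, the function w = Phi (1 - Phi)^(n+1) satisfies
     (n+1) g_n - (n+2) g_(n+1) = 2 pi (-t phi w - (phi w)'),
   and phi w vanishes at both infinities, so (n+1) int g_n - (n+2) int g_(n+1)
   equals 2 pi int -t phi(t) w(t) dt.  Folding this integral onto [0, oo) with
   Phi(-t) = 1 - Phi(t) gives the integrand t phi Phi (1 - Phi) (Phi^n - (1 - Phi)^n),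
   which is positive for t > 0 because Phi(t) > 1/2 there.
   The symmetry of Phi needs the Gaussian integral, obtained by Feynman's trick:
   (int_0^x exp(-t^2) dt)^2 + int_0^1 exp(-x^2 (1 + t^2)) / (1 + t^2) dt has zero
   derivative, equals pi/4 at x = 0, and its second term vanishes as x -> oo. *)

(** * Integrals over the real line *)

Lemma ex_derive_continuous_R (f : R -> R) (x : R) : ex_derive f x -> continuous f x.
Proof. apply (ex_derive_continuous (V := R_NormedModule)). Qed.

Lemma ex_RInt_cont (f : R -> R) :
  (forall x, continuous f x) -> forall a b, ex_RInt f a b.
Proof. intros Hf a b; apply (ex_RInt_continuous (V := R_CompleteNormedModule)); auto. Qed.

Lemma RInt_0_sub (f : R -> R) (u v : R) :
  (forall x, continuous f x) -> RInt f 0 v - RInt f 0 u = RInt f u v.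
Proof.
  intros Hf.
  rewrite <- (RInt_Chasles (V := R_CompleteNormedModule) f u 0 v) by (apply ex_RInt_cont; auto).
  rewrite <- (opp_RInt_swap (V := R_CompleteNormedModule) f 0 u) by (apply ex_RInt_cont; auto).
  unfold plus, opp; simpl; ring.
Qed.

Lemma continuous_comp_opp (f : R -> R) :
  (forall t, continuous f t) -> forall t, continuous (fun t => f (- t)) t.
Proof.
  intros Hf t; apply (continuous_comp Ropp f); [| apply Hf].
  apply ex_derive_continuous_R; auto_derive; trivial.
Qed.

Lemma RInt_0_opp (f : R -> R) (x : R) :
  (forall t, continuous f t) -> RInt f 0 (- x) = - RInt (fun t => f (- t)) 0 x.
Proof.
  intros Hf.
  assert (H := RInt_correct (V := R_CompleteNormedModule) f 0 (- x) (ex_RInt_cont f Hf _ _)).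
  rewrite <- Ropp_0 in H at 1.
  apply is_RInt_comp_opp in H.
  rewrite <- (is_RInt_unique _ _ _ _ H), (RInt_opp (V := R_CompleteNormedModule)); [reflexivity |].
  now apply ex_RInt_cont, continuous_comp_opp.
Qed.

Lemma RInt_sym (f : R -> R) (b : R) :
  (forall t, continuous f t) -> RInt f (- b) b = RInt (fun t => f t + f (- t)) 0 b.
Proof.
  intros Hf.
  assert (Hf' := continuous_comp_opp f Hf).
  rewrite <- RInt_0_sub, RInt_0_opp by auto.
  rewrite (RInt_plus (V := R_CompleteNormedModule)) by (apply ex_RInt_cont; auto).
  unfold plus; simpl; ring.
Qed.

Lemma is_derive_RInt_0 (f : R -> R) :
  (forall x, continuous f x) -> forall x, is_derive (fun x => RInt f 0 x) x (f x).
Proof.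
  intros Hf x; apply (is_derive_RInt f _ 0 x); [| apply Hf].
  apply filter_forall; intros y.
  apply (RInt_correct (V := R_CompleteNormedModule)), ex_RInt_cont, Hf.
Qed.

Lemma Rabs_RInt_le_dominated (f g : R -> R) :
  (forall x, continuous f x) -> (forall x, continuous g x) ->
  (forall t, Rabs (f t) <= g t) -> forall u v, Rabs (RInt f u v) <= Rabs (RInt g u v).
Proof.
  intros Hf Hg Hfg.
  assert (Hle : forall u v, u <= v -> Rabs (RInt f u v) <= Rabs (RInt g u v)).
  { intros u v Huv.
    apply (Rle_trans _ (RInt g u v)); [| apply Rle_abs].
    apply (norm_RInt_le f g u v); [exact Huv | intros x _; apply Hfg | |].
    - apply (RInt_correct (V := R_CompleteNormedModule)), ex_RInt_cont, Hf.
    - apply (RInt_correct (V := R_CompleteNormedModule)), ex_RInt_cont, Hg. }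
  intros u v; destruct (Rle_lt_dec u v) as [Huv | Hvu]; [now apply Hle |].
  rewrite <- (opp_RInt_swap (V := R_CompleteNormedModule) f),
    <- (opp_RInt_swap (V := R_CompleteNormedModule) g) by (apply ex_RInt_cont; auto).
  unfold opp; simpl; rewrite !Rabs_Ropp; apply Hle; lra.
Qed.

(* Cauchy criterion: partial integrals of [f] oscillate less than those of its majorant [g]. *)
Lemma ex_lim_RInt_dominated (F : (R -> Prop) -> Prop) {FF : ProperFilter F}
    (f g : R -> R) (l : R) :
  (forall x, continuous f x) -> (forall x, continuous g x) ->
  (forall t, Rabs (f t) <= g t) ->
  filterlim (fun x => RInt g 0 x) F (locally l) ->
  exists l', filterlim (fun x => RInt f 0 x) F (locally l').
Proof.
  intros Hf Hg Hfg Hl.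
  apply (filterlim_locally_cauchy (U := R_CompleteSpace)); intros eps.
  assert (He : 0 < eps / 2) by (destruct eps; simpl; lra).
  exists (fun x => ball l (mkposreal _ He) (RInt g 0 x)); split.
  - apply Hl; apply locally_ball.
  - intros u v Hu Hv; change (Rabs (RInt f 0 v - RInt f 0 u) < eps).
    change (Rabs (RInt g 0 u - l) < eps / 2) in Hu.
    change (Rabs (RInt g 0 v - l) < eps / 2) in Hv.
    rewrite RInt_0_sub by auto.
    eapply Rle_lt_trans; [apply (Rabs_RInt_le_dominated f g); auto |].
    rewrite <- RInt_0_sub by auto.
    replace (RInt g 0 v - RInt g 0 u) with ((RInt g 0 v - l) - (RInt g 0 u - l)) by ring.
    eapply Rle_lt_trans; [apply Rabs_triang |]; rewrite Rabs_Ropp; lra.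
Qed.

Lemma filterlim_at_point (f : R -> R) (t : R) : filterlim f (at_point t) (locally (f t)).
Proof. intros P HP; exact (locally_singleton _ _ HP). Qed.

Lemma is_RInt_gen_derive (f F : R -> R) (Fa Fb : (R -> Prop) -> Prop)
    {FFa : Filter Fa} {FFb : Filter Fb} (la lb : R) :
  (forall x, is_derive F x (f x)) -> (forall x, continuous f x) ->
  filterlim F Fa (locally la) -> filterlim F Fb (locally lb) ->
  is_RInt_gen f Fa Fb (lb - la).
Proof.
  intros HF Hf Ha Hb.
  assert (HD : forall x, Derive F x = f x) by (intros; apply is_derive_unique, HF).
  apply (is_RInt_gen_ext (Derive F)).
  - apply filter_forall; intros ab x _; apply HD.
  - apply is_RInt_gen_Derive; auto; apply filter_forall; intros ab x _.
    + eexists; apply HF.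
    + apply (continuous_ext f); [intros; symmetry; apply HD | apply Hf].
Qed.

Lemma is_lim_RInt_sym (f : R -> R) (l : R) :
  is_RInt_gen f (Rbar_locally m_infty) (Rbar_locally p_infty) l ->
  is_lim (fun b => RInt f (- b) b) p_infty l.
Proof.
  intros Hf P HP.
  assert (Hb : filterlim (fun b => (- b, b)) (Rbar_locally p_infty)
                 (filter_prod (Rbar_locally m_infty) (Rbar_locally p_infty))).
  { apply filterlim_pair; [apply (filterlim_Rbar_opp p_infty) | apply filterlim_id]. }
  assert (H := filterlimi_comp _ _ _ _ _ _ _ _ Hb Hf P HP).
  unfold filtermapi in H; unfold filtermap.
  revert H; apply filter_imp; intros b [y [Hy HPy]]; simpl in Hy.
  now rewrite (is_RInt_unique _ _ _ _ Hy).
Qed.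

Lemma is_lim_comp_opp (f : R -> R) (l : R) :
  is_lim f p_infty l -> is_lim (fun x => f (- x)) m_infty l.
Proof. intros Hf; eapply filterlim_comp; [apply (filterlim_Rbar_opp m_infty) | exact Hf]. Qed.

Lemma is_lim_inv_sqr_bound (f : R -> R) (C : R) :
  (forall t, Rabs (f t) <= C / (1 + t ^ 2)) -> is_lim f p_infty 0 /\ is_lim f m_infty 0.
Proof.
  intros Hf.
  assert (Hx : forall x : Rbar, is_lim Rabs x p_infty -> is_lim f x 0).
  { intros x Habs.
    assert (Hsq : is_lim (fun t => 1 + t ^ 2) x p_infty).
    { apply (is_lim_le_p_loc Rabs); [| exact Habs].
      apply filter_forall; intros t; rewrite <- pow2_abs; nra. }
    assert (Hbound : is_lim (fun t => C / (1 + t ^ 2)) x 0).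
    { rewrite <- (Rmult_0_r C); apply (is_lim_scal_l (fun t => / (1 + t ^ 2)) C x 0).
      apply (is_lim_inv _ _ p_infty); [exact Hsq | discriminate]. }
    apply (is_lim_le_le_loc (fun t => - (C / (1 + t ^ 2))) (fun t => C / (1 + t ^ 2))).
    - apply filter_forall; intros t; apply Rabs_le_between, Hf.
    - rewrite <- Ropp_0; apply (is_lim_opp _ _ 0), Hbound.
    - exact Hbound. }
  split; apply Hx;
    [exact (is_lim_Rabs _ _ _ (is_lim_id p_infty)) | exact (is_lim_Rabs _ _ _ (is_lim_id m_infty))].
Qed.

(** * The Gaussian integral *)

Definition gauss (t : R) : R := exp (- (t ^ 2)).
Definition gauss_int (x : R) : R := RInt gauss 0 x.

Lemma gauss_continuous (t : R) : continuous gauss t.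
Proof. apply ex_derive_continuous_R; unfold gauss; auto_derive; trivial. Qed.

Lemma gauss_bound (t : R) : 0 < gauss t <= 1 / (1 + t ^ 2).
Proof.
  unfold gauss; split; [apply exp_pos |].
  rewrite exp_Ropp, Rdiv_1_l; apply Rinv_le_contravar; [nra | apply exp_ineq1_le].
Qed.

Lemma gauss_opp (t : R) : gauss (- t) = gauss t.
Proof. unfold gauss; f_equal; ring. Qed.

Lemma is_derive_gauss_int (x : R) : is_derive gauss_int x (gauss x).
Proof. exact (is_derive_RInt_0 gauss gauss_continuous x). Qed.

Lemma gauss_int_opp (x : R) : gauss_int (- x) = - gauss_int x.
Proof.
  unfold gauss_int; rewrite RInt_0_opp by apply gauss_continuous.
  now rewrite (RInt_ext _ gauss) by (intros; apply gauss_opp).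
Qed.

Definition feynman_kernel (x t : R) : R := exp (- (x ^ 2) * (1 + t ^ 2)) / (1 + t ^ 2).
Definition feynman (x : R) : R := RInt (feynman_kernel x) 0 1.

Lemma feynman_kernel_continuous (x t : R) : continuous (feynman_kernel x) t.
Proof. apply ex_derive_continuous_R; unfold feynman_kernel; auto_derive; nra. Qed.

Lemma is_derive_feynman_kernel (x t : R) :
  is_derive (fun z => feynman_kernel z t) x (-2 * x * exp (- (x ^ 2) * (1 + t ^ 2))).
Proof. unfold feynman_kernel; auto_derive; [nra |]; simpl; field; nra. Qed.

Lemma feynman_kernel_Derive_continuous (x t : R) :
  continuity_2d_pt (fun u v => Derive (fun z => feynman_kernel z v) u) x t.
Proof.
  apply (continuity_2d_pt_ext (fun u v => (-2 * u) * exp (- (u * u) * (1 + v * v)))).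
  { intros u v; symmetry; apply is_derive_unique.
    replace (u * u) with (u ^ 2) by ring; replace (v * v) with (v ^ 2) by ring.
    apply is_derive_feynman_kernel. }
  apply continuity_2d_pt_mult.
  - apply continuity_2d_pt_mult; [apply continuity_2d_pt_const | apply continuity_2d_pt_id1].
  - apply (continuity_1d_2d_pt_comp exp (fun u v => - (u * u) * (1 + v * v))).
    + apply derivable_continuous_pt, derivable_pt_exp.
    + apply continuity_2d_pt_mult.
      * apply continuity_2d_pt_opp, continuity_2d_pt_mult; apply continuity_2d_pt_id1.
      * apply continuity_2d_pt_plus; [apply continuity_2d_pt_const |].
        apply continuity_2d_pt_mult; apply continuity_2d_pt_id2.
Qed.

Lemma is_derive_feynman (x : R) : is_derive feynman x (-2 * gauss x * gauss_int x).
Proof.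
  replace (-2 * gauss x * gauss_int x)
    with (RInt (fun t => Derive (fun u => feynman_kernel u t) x) 0 1).
  { apply (is_derive_RInt_param feynman_kernel 0 1 x).
    - apply filter_forall; intros y t _; eexists; apply is_derive_feynman_kernel.
    - intros t _; apply feynman_kernel_Derive_continuous.
    - apply filter_forall; intros y; apply ex_RInt_cont, feynman_kernel_continuous. }
  (* substitution u = x t *)
  rewrite (RInt_ext _ (fun t => scal (-2 * gauss x) (scal x (gauss (x * t + 0))))).
  2:{ intros t _; erewrite is_derive_unique by apply is_derive_feynman_kernel.
      unfold scal; simpl; unfold mult; simpl; unfold gauss.
      replace (- (x * (x * 1)) * (1 + t * (t * 1))) with (- x ^ 2 + - (x * t + 0) ^ 2) by ring.
      rewrite exp_plus; ring. }
  rewrite (RInt_scal (V := R_CompleteNormedModule)).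
  - rewrite (RInt_comp_lin (V := R_CompleteNormedModule)) by (apply ex_RInt_cont, gauss_continuous).
    rewrite Rmult_0_r, Rmult_1_r, !Rplus_0_r; reflexivity.
  - apply ex_RInt_cont; intros t; apply ex_derive_continuous_R.
    unfold scal; simpl; unfold mult, gauss; simpl; auto_derive; trivial.
Qed.

Lemma feynman_0 : feynman 0 = PI / 4.
Proof.
  unfold feynman; rewrite (RInt_ext _ (fun t => / (1 + t ^ 2))).
  2:{ intros t _; unfold feynman_kernel; rewrite pow_i, Ropp_0, Rmult_0_l, exp_0 by lia.
      apply Rdiv_1_l. }
  apply is_RInt_unique; rewrite <- atan_1.
  replace (atan 1) with (atan 1 - atan 0) by (rewrite atan_0; ring).
  apply (is_RInt_derive (V := R_CompleteNormedModule) atan).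
  - intros t _; replace (t ^ 2) with (Rsqr t) by (unfold Rsqr; ring); apply is_derive_atan.
  - intros t _; apply ex_derive_continuous_R; auto_derive; nra.
Qed.

Lemma gauss_int_sqr_add_feynman (x : R) : gauss_int x ^ 2 + feynman x = PI / 4.
Proof.
  assert (Hd : forall y, is_derive (fun y => gauss_int y ^ 2 + feynman y) y 0).
  { intros y; eapply is_derive_ext; [intros; reflexivity |].
    replace 0 with (plus (INR 2 * gauss y * gauss_int y ^ Init.Nat.pred 2)
                         (-2 * gauss y * gauss_int y)) by (unfold plus; simpl; ring).
    apply (is_derive_plus (V := R_NormedModule)); [apply is_derive_pow |];
      auto using is_derive_gauss_int, is_derive_feynman. }
  assert (H := is_RInt_derive (V := R_CompleteNormedModule) _ _ 0 x
                 (fun y _ => Hd y) (fun y _ => continuous_const 0 y)).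
  assert (Hc := is_RInt_const (V := R_NormedModule) 0 x 0).
  assert (Heq := is_RInt_unique _ _ _ _ H); rewrite (is_RInt_unique _ _ _ _ Hc) in Heq.
  assert (H0 : gauss_int 0 = 0) by apply (RInt_point (V := R_CompleteNormedModule)).
  unfold minus, plus, opp, scal in Heq; simpl in Heq; unfold mult in Heq; simpl in Heq.
  rewrite H0, feynman_0 in Heq; lra.
Qed.

Lemma feynman_bound (x : R) : 0 <= feynman x <= gauss x.
Proof.
  assert (Hk : forall t, 0 <= t <= 1 -> 0 <= feynman_kernel x t <= gauss x).
  { intros t Ht; unfold feynman_kernel, gauss.
    assert (H1 : 1 <= 1 + t ^ 2) by nra.
    assert (Hexp : exp (- (x ^ 2) * (1 + t ^ 2)) <= exp (- (x ^ 2))).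
    { destruct (Rle_lt_or_eq_dec (- (x ^ 2) * (1 + t ^ 2)) (- (x ^ 2))) as [Hlt | ->];
        [nra | | lra].
      now apply Rlt_le, exp_increasing. }
    split; [apply Rlt_le, Rdiv_lt_0_compat; [apply exp_pos | lra] |].
    apply (Rle_trans _ (exp (- (x ^ 2) * (1 + t ^ 2)))); [| exact Hexp].
    apply Rmult_le_reg_r with (1 + t ^ 2); [lra |]; unfold Rdiv; rewrite Rmult_assoc, Rinv_l by lra.
    assert (0 < exp (- (x ^ 2) * (1 + t ^ 2))) by apply exp_pos.
    nra. }
  unfold feynman; split.
  - apply RInt_ge_0; [lra | apply ex_RInt_cont, feynman_kernel_continuous |].
    intros t Ht; apply Hk; lra.
  - apply (Rle_trans _ (RInt (fun _ => gauss x) 0 1)).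
    + apply RInt_le; [lra | apply ex_RInt_cont, feynman_kernel_continuous | apply ex_RInt_const |].
      intros t Ht; apply Hk; lra.
    + rewrite (RInt_const (V := R_CompleteNormedModule)).
      unfold scal; simpl; unfold mult; simpl; lra.
Qed.

Lemma is_lim_gauss_int_p : is_lim gauss_int p_infty (sqrt PI / 2).
Proof.
  assert (Hf : is_lim feynman p_infty 0).
  { apply (is_lim_inv_sqr_bound feynman 1); intros t.
    destruct (feynman_bound t), (gauss_bound t); rewrite Rabs_right; lra. }
  apply (is_lim_ext_loc (fun x => sqrt (PI / 4 - feynman x))).
  { exists 0; intros x Hx.
    assert (Hpos : 0 <= gauss_int x).
    { apply RInt_ge_0; [lra | apply ex_RInt_cont, gauss_continuous |].
      intros t _; apply Rlt_le, gauss_bound. }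
    rewrite <- (gauss_int_sqr_add_feynman x).
    replace (gauss_int x ^ 2 + feynman x - feynman x) with (gauss_int x ^ 2) by ring.
    now apply sqrt_pow2. }
  replace (sqrt PI / 2) with (sqrt (PI / 4 - 0)).
  - apply (is_lim_comp_continuous (fun x => PI / 4 - feynman x) sqrt p_infty (PI / 4 - 0)).
    + apply is_lim_minus'; [apply is_lim_const | exact Hf].
    + apply continuous_sqrt.
  - rewrite Rminus_0_r, sqrt_div_alt by lra.
    replace 4 with (2 * 2) by ring; rewrite sqrt_square; lra.
Qed.

Lemma is_lim_gauss_int_m : is_lim gauss_int m_infty (- (sqrt PI / 2)).
Proof.
  apply (is_lim_ext (fun x => - gauss_int (- x))); [intros x; rewrite gauss_int_opp; ring |].
  apply (is_lim_opp _ _ (sqrt PI / 2)), is_lim_comp_opp, is_lim_gauss_int_p.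
Qed.

(** * The standard normal distribution *)

Definition phi (t : R) : R := exp (- (t ^ 2) / 2) / sqrt (2 * PI).

Lemma sqrt_2PI : sqrt (2 * PI) = sqrt 2 * sqrt PI.
Proof. apply sqrt_mult; left; [lra | apply PI_RGT_0]. Qed.

Lemma sqrt_PI_pos : 0 < sqrt PI.
Proof. apply sqrt_lt_R0, PI_RGT_0. Qed.

Lemma sqrt_2PI_pos : 0 < sqrt (2 * PI).
Proof. rewrite sqrt_2PI; apply Rmult_lt_0_compat; [apply Rlt_sqrt2_0 | apply sqrt_PI_pos]. Qed.

Lemma phi_gauss (t : R) : phi t = / sqrt PI * (/ sqrt 2 * gauss (/ sqrt 2 * t + 0)).
Proof.
  assert (H2 := Rlt_sqrt2_0); assert (HP := sqrt_PI_pos).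
  assert (Hs : sqrt 2 * sqrt 2 = 2) by (apply sqrt_sqrt; lra).
  unfold phi, gauss; rewrite sqrt_2PI.
  replace ((/ sqrt 2 * t + 0) ^ 2) with (t ^ 2 / (sqrt 2 * sqrt 2)) by (field; lra).
  rewrite Hs; replace (- (t ^ 2 / 2)) with (- t ^ 2 / 2) by field; field; lra.
Qed.

Lemma phi_continuous (t : R) : continuous phi t.
Proof. apply ex_derive_continuous_R; unfold phi; auto_derive; trivial. Qed.

Lemma phi_pos (t : R) : 0 < phi t.
Proof. apply Rdiv_lt_0_compat; [apply exp_pos | apply sqrt_2PI_pos]. Qed.

Lemma phi_opp (t : R) : phi (- t) = phi t.
Proof. unfold phi; do 3 f_equal; ring. Qed.

Lemma is_derive_phi (t : R) : is_derive phi t (- t * phi t).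
Proof.
  assert (H := sqrt_2PI_pos).
  unfold phi; auto_derive; [trivial |]; simpl; unfold Rdiv; field; lra.
Qed.

Lemma phi_sqr (t : R) : 2 * PI * phi t ^ 2 = gauss t.
Proof.
  assert (H := sqrt_2PI_pos); assert (HP := PI_RGT_0).
  unfold phi, gauss; rewrite <- (pow2_sqrt (2 * PI)) at 1 by lra.
  replace (exp (- (t ^ 2))) with (exp (- (t ^ 2) / 2) * exp (- (t ^ 2) / 2))
    by (rewrite <- exp_plus; f_equal; field).
  field; lra.
Qed.

Lemma phi_bound (t : R) : phi t <= (2 / sqrt (2 * PI)) / (1 + t ^ 2).
Proof.
  assert (H := sqrt_2PI_pos).
  assert (He : exp (- (t ^ 2) / 2) <= 2 / (1 + t ^ 2)).
  { replace (- (t ^ 2) / 2) with (- (t ^ 2 / 2)) by field; rewrite exp_Ropp.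
    replace (2 / (1 + t ^ 2)) with (/ ((1 + t ^ 2) / 2)) by (field; nra).
    apply Rinv_le_contravar; [nra |]; generalize (exp_ineq1_le (t ^ 2 / 2)); lra. }
  unfold phi; replace (2 / sqrt (2 * PI) / (1 + t ^ 2)) with (2 / (1 + t ^ 2) / sqrt (2 * PI))
    by (field; split; nra).
  apply Rmult_le_compat_r; [apply Rlt_le, Rinv_0_lt_compat, H | exact He].
Qed.

Lemma RInt_phi (x : R) : RInt phi 0 x = / sqrt PI * gauss_int (/ sqrt 2 * x).
Proof.
  rewrite (RInt_ext _ _ _ _ (fun t _ => phi_gauss t)).
  rewrite (RInt_scal (V := R_CompleteNormedModule) (fun t => / sqrt 2 * gauss (/ sqrt 2 * t + 0))).
  - rewrite (RInt_comp_lin (V := R_CompleteNormedModule)) by (apply ex_RInt_cont, gauss_continuous).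
    now rewrite Rmult_0_r, !Rplus_0_r.
  - apply ex_RInt_cont; intros t; apply ex_derive_continuous_R; unfold gauss; auto_derive; trivial.
Qed.

Lemma is_lim_RInt_phi_p : is_lim (fun x => RInt phi 0 x) p_infty (1 / 2).
Proof.
  assert (H2 := Rlt_sqrt2_0); assert (HP := sqrt_PI_pos).
  apply (is_lim_ext (fun x => / sqrt PI * gauss_int (/ sqrt 2 * x + 0))).
  { intros x; now rewrite RInt_phi, Rplus_0_r. }
  replace (Finite (1 / 2)) with (Rbar_mult (/ sqrt PI) (sqrt PI / 2))
    by (simpl; f_equal; field; lra).
  apply is_lim_scal_l, is_lim_comp_lin; [| apply Rgt_not_eq, Rinv_0_lt_compat, H2].
  rewrite Rbar_mult_comm,
    (is_Rbar_mult_unique _ _ _ (is_Rbar_mult_p_infty_pos (/ sqrt 2) (Rinv_0_lt_compat _ H2))).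
  apply is_lim_gauss_int_p.
Qed.

Definition cdf (t : R) : R := 1 / 2 + RInt phi 0 t.

Lemma is_derive_cdf (t : R) : is_derive cdf t (phi t).
Proof.
  unfold cdf; rewrite <- (Rplus_0_l (phi t)).
  apply (is_derive_plus (V := R_NormedModule)); [apply (is_derive_const (V := R_NormedModule)) |].
  apply is_derive_RInt_0, phi_continuous.
Qed.

Lemma cdf_opp (t : R) : cdf (- t) = 1 - cdf t.
Proof.
  unfold cdf; rewrite RInt_0_opp by apply phi_continuous.
  rewrite (RInt_ext _ phi) by (intros; apply phi_opp); lra.
Qed.

Lemma is_lim_cdf_p : is_lim cdf p_infty 1.
Proof.
  replace 1 with (1 / 2 + 1 / 2) by field.
  apply is_lim_plus'; [apply is_lim_const | apply is_lim_RInt_phi_p].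
Qed.

Lemma is_lim_cdf_m : is_lim cdf m_infty 0.
Proof.
  apply (is_lim_ext (fun x => 1 - cdf (- x))); [intros x; rewrite cdf_opp; ring |].
  rewrite <- (Rminus_diag 1); apply is_lim_minus'; [apply is_lim_const |].
  apply is_lim_comp_opp, is_lim_cdf_p.
Qed.

Lemma Phi_cdf (t : R) : Phi t = cdf t.
Proof.
  apply is_RInt_gen_unique; rewrite <- (Rminus_0_r (cdf t)).
  apply (is_RInt_gen_derive phi cdf (Rbar_locally m_infty) (at_point t));
    auto using is_derive_cdf, phi_continuous, filterlim_at_point.
  exact is_lim_cdf_m.
Qed.

Lemma cdf_lt (a b : R) : a < b -> cdf a < cdf b.
Proof.
  intros Hab.
  assert (H := RInt_0_sub phi a b phi_continuous).
  assert (0 < RInt phi a b) by (apply RInt_gt_0; auto using phi_pos, phi_continuous).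
  unfold cdf; lra.
Qed.

Lemma cdf_bounds (t : R) : 0 < cdf t < 1.
Proof.
  assert (Hle : forall s, cdf s <= 1).
  { intros s; apply (is_lim_le_loc (fun _ => cdf s) cdf p_infty (cdf s) 1);
      [| apply is_lim_const | apply is_lim_cdf_p].
    exists s; intros x Hx; now apply Rlt_le, cdf_lt. }
  assert (Hlt : forall s, cdf s < 1).
  { intros s; apply (Rlt_le_trans _ (cdf (s + 1))); [apply cdf_lt; lra | apply Hle]. }
  generalize (Hlt t) (Hlt (- t)); rewrite cdf_opp; lra.
Qed.

Lemma cdf_gt_half (t : R) : 0 < t -> 1 / 2 < cdf t.
Proof.
  intros Ht; replace (1 / 2) with (cdf 0); [now apply cdf_lt |].
  unfold cdf; rewrite (RInt_point (V := R_CompleteNormedModule)); unfold zero; simpl; ring.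
Qed.

Lemma ex_derive_cdf (t : R) : ex_derive cdf t.
Proof. eexists; apply is_derive_cdf. Qed.

Lemma ex_derive_phi (t : R) : ex_derive phi t.
Proof. eexists; apply is_derive_phi. Qed.

(** * Monotonicity of P *)

Lemma pow_unit_interval (x : R) (n : nat) : 0 <= x <= 1 -> 0 <= x ^ n <= 1.
Proof.
  intros Hx; split; [now apply pow_le |].
  rewrite <- (pow1 n); apply pow_incr; lra.
Qed.

Lemma pow_lt_compat_l (x y : R) (n : nat) : 0 <= x < y -> (1 <= n)%nat -> x ^ n < y ^ n.
Proof.
  intros Hxy Hn; destruct n as [| n]; [lia |]; simpl.
  assert (x ^ n <= y ^ n) by (apply pow_incr; lra).
  assert (0 < y ^ n) by (apply pow_lt; lra).
  nra.
Qed.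

Definition integrand (n : nat) (t : R) : R := gauss t * (1 - cdf t) ^ n.

Definition tail_integral (n : nat) : R :=
  RInt_gen (integrand n) (Rbar_locally m_infty) (Rbar_locally p_infty).

Lemma integrand_continuous (n : nat) (t : R) : continuous (integrand n) t.
Proof. apply ex_derive_continuous_R; unfold integrand, gauss; auto_derive; apply ex_derive_cdf. Qed.

Lemma integrand_bound (n : nat) (t : R) : 0 <= integrand n t <= gauss t.
Proof.
  assert (Hc := cdf_bounds t); assert (Hg := gauss_bound t).
  assert (0 <= (1 - cdf t) ^ n <= 1) by (apply pow_unit_interval; lra).
  unfold integrand; split; nra.
Qed.

Lemma is_RInt_gen_tail_integral (n : nat) :
  is_RInt_gen (integrand n) (Rbar_locally m_infty) (Rbar_locally p_infty) (tail_integral n).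
Proof.
  assert (Hdom : forall t, Rabs (integrand n t) <= gauss t).
  { intros t; destruct (integrand_bound n t); rewrite Rabs_right; lra. }
  destruct (ex_lim_RInt_dominated (Rbar_locally p_infty) (integrand n) gauss _
              (integrand_continuous n) gauss_continuous Hdom is_lim_gauss_int_p) as [lp Hp].
  destruct (ex_lim_RInt_dominated (Rbar_locally m_infty) (integrand n) gauss _
              (integrand_continuous n) gauss_continuous Hdom is_lim_gauss_int_m) as [lm Hm].
  unfold tail_integral; apply (RInt_gen_correct (V := R_CompleteNormedModule)); exists (lp - lm).
  apply (is_RInt_gen_derive _ (fun x => RInt (integrand n) 0 x)
           (Rbar_locally m_infty) (Rbar_locally p_infty)); auto.
  - apply is_derive_RInt_0, integrand_continuous.
  - apply integrand_continuous.
Qed.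

Lemma P_tail_integral (n : nat) : P (S n) = INR (S n) / sqrt PI * tail_integral n.
Proof.
  unfold P, tail_integral; replace (S n - 1)%nat with n by lia.
  do 2 f_equal; apply functional_extensionality; intros t.
  now rewrite Phi_cdf.
Qed.

Section Weighted_tail_integrals.

Variable n : nat.
Hypothesis n_pos : (1 <= n)%nat.

Let w (t : R) : R := cdf t * (1 - cdf t) ^ S n.
Let h (t : R) : R := INR (S n) * integrand n t - INR (S (S n)) * integrand (S n) t.
Let k (t : R) : R := - t * phi t * w t.

Lemma is_derive_phi_w (t : R) :
  is_derive (fun t => - (phi t * w t)) t (h t / (2 * PI) - k t).
Proof.
  unfold h, k, w, integrand; auto_derive; [auto using ex_derive_phi, ex_derive_cdf |].
  replace (Derive (fun x => phi x) t) with (- t * phi t)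
    by (symmetry; apply is_derive_unique, is_derive_phi).
  replace (Derive (fun x => cdf x) t) with (phi t)
    by (symmetry; apply is_derive_unique, is_derive_cdf).
  change (match n with 0%nat => 1 | S _ => INR n + 1 end) with (INR (S n)).
  replace (1 + - cdf t) with (1 - cdf t) by ring.
  rewrite <- (phi_sqr t), !S_INR; simpl; field; apply PI_neq0.
Qed.

Lemma is_RInt_gen_h :
  is_RInt_gen h (Rbar_locally m_infty) (Rbar_locally p_infty)
    (INR (S n) * tail_integral n - INR (S (S n)) * tail_integral (S n)).
Proof.
  apply (is_RInt_gen_minus (V := R_NormedModule));
    apply (is_RInt_gen_scal (V := R_NormedModule)), is_RInt_gen_tail_integral.
Qed.

Lemma is_lim_phi_w : is_lim (fun t => - (phi t * w t)) p_infty 0 /\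
                     is_lim (fun t => - (phi t * w t)) m_infty 0.
Proof.
  apply (is_lim_inv_sqr_bound _ (2 / sqrt (2 * PI))); intros t.
  assert (Hc := cdf_bounds t); assert (Hphi := phi_pos t); assert (Hb := phi_bound t).
  assert (Hp : 0 <= (1 - cdf t) ^ S n <= 1) by (apply pow_unit_interval; lra).
  assert (Hw : 0 <= w t <= 1) by (unfold w; split; nra).
  rewrite Rabs_Ropp, Rabs_right; [| apply Rle_ge]; nra.
Qed.

Lemma is_RInt_gen_k :
  is_RInt_gen k (Rbar_locally m_infty) (Rbar_locally p_infty)
    (/ (2 * PI) * (INR (S n) * tail_integral n - INR (S (S n)) * tail_integral (S n))).
Proof.
  assert (Hd : is_RInt_gen (fun t => h t / (2 * PI) - k t)
                 (Rbar_locally m_infty) (Rbar_locally p_infty) (0 - 0)).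
  { destruct is_lim_phi_w as [Hp Hm].
    apply (is_RInt_gen_derive _ (fun t => - (phi t * w t))
             (Rbar_locally m_infty) (Rbar_locally p_infty)); auto using is_derive_phi_w.
    intros t; apply ex_derive_continuous_R; unfold h, k, w, integrand, gauss.
    auto_derive; repeat split; auto using ex_derive_phi, ex_derive_cdf. }
  assert (Hh := is_RInt_gen_scal (V := R_NormedModule) h (/ (2 * PI)) _ is_RInt_gen_h).
  assert (H := is_RInt_gen_minus (V := R_NormedModule) _ _ _ _ Hh Hd).
  unfold minus, plus, opp, scal in H; simpl in H; unfold mult in H; simpl in H.
  rewrite Rminus_0_r, Ropp_0, Rplus_0_r in H.
  revert H; apply is_RInt_gen_ext; apply filter_forall; intros ab t _.
  change (/ (2 * PI) * h t + - (h t / (2 * PI) - k t) = k t); unfold Rdiv; ring.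
Qed.

Lemma k_continuous (t : R) : continuous k t.
Proof.
  apply ex_derive_continuous_R; unfold k, w.
  auto_derive; repeat split; auto using ex_derive_phi, ex_derive_cdf.
Qed.

Lemma k_sym_pos (t : R) : 0 < t -> 0 < k t + k (- t).
Proof.
  intros Ht.
  assert (Hc := cdf_bounds t); assert (Hhalf := cdf_gt_half t Ht); assert (Hphi := phi_pos t).
  assert (Hpow : (1 - cdf t) ^ n < cdf t ^ n) by (apply pow_lt_compat_l; [lra | exact n_pos]).
  replace (k t + k (- t))
    with (t * phi t * (cdf t * (1 - cdf t)) * (cdf t ^ n - (1 - cdf t) ^ n)).
  - apply Rmult_lt_0_compat; [| lra].
    apply Rmult_lt_0_compat; [apply Rmult_lt_0_compat | apply Rmult_lt_0_compat]; lra.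
  - unfold k, w; rewrite phi_opp, cdf_opp.
    replace (1 - (1 - cdf t)) with (cdf t) by ring; simpl; ring.
Qed.

Lemma weighted_tail_integral_lt :
  INR (S (S n)) * tail_integral (S n) < INR (S n) * tail_integral n.
Proof.
  set (L := INR (S n) * tail_integral n - INR (S (S n)) * tail_integral (S n)).
  set (s := fun t => k t + k (- t)).
  assert (Hs : forall t, continuous s t).
  { intros t; apply (continuous_plus k (fun t => k (- t)));
      [apply k_continuous | apply continuous_comp_opp, k_continuous]. }
  assert (Hpos : 0 < RInt s 0 1)
    by (apply RInt_gt_0; [lra | intros t Ht; apply k_sym_pos; lra | auto]).
  assert (Hle : Rbar_le (RInt s 0 1) (/ (2 * PI) * L)).
  { apply (is_lim_le_loc (fun _ => RInt s 0 1) (fun b => RInt k (- b) b) p_infty);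
      [| apply is_lim_const | apply is_lim_RInt_sym, is_RInt_gen_k].
    exists 1; intros b Hb.
    rewrite RInt_sym by apply k_continuous; fold s.
    assert (H := RInt_0_sub s 1 b Hs).
    assert (0 <= RInt s 1 b).
    { apply RInt_ge_0; [lra | apply ex_RInt_cont, Hs |].
      intros t Ht; apply Rlt_le, k_sym_pos; lra. }
    lra. }
  simpl in Hle.
  assert (HPI := PI_RGT_0).
  assert (0 < L); [| unfold L in *; lra].
  apply (Rmult_lt_reg_l (/ (2 * PI))); [apply Rinv_0_lt_compat; lra | lra].
Qed.

End Weighted_tail_integrals.

Theorem mainTheorem6 : forall m : nat, (2 <= m)%nat -> P (S m) < P m.
Proof.
  intros m Hm; destruct m as [| n]; [lia |].
  rewrite !P_tail_integral; unfold Rdiv.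
  rewrite (Rmult_comm (INR (S (S n)))), (Rmult_comm (INR (S n))), !Rmult_assoc.
  apply Rmult_lt_compat_l; [apply Rinv_0_lt_compat, sqrt_PI_pos |].
  apply weighted_tail_integral_lt; lia.
Qed.
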